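(* A graph is isomorphic to $KB_m(G)$ for some bipartite graph $G$ if and only if it is an IIC-comparability graph. That is, $KB_m(\text{bipartite})=\text{IIC-comparability}$.
   Context: All graphs are finite and simple. A biclique of a graph $G$ is a set $P\subseteq V(G)$ such that the induced subgraph $G[P]$ is a complete bipartite graph with both parts nonempty, and $P$ is inclusion-maximal with this property. Since $G[P]$ is connected, its bipartition into two nonempty independent sets $X,Y$ (every vertex of $X$ adjacent to every vertex of $Y$) is unique; we write $P=XY$ to mean $P=X\cup Y$ with $X,Y$ these two parts, called the sides of $P$. Two bicliques $P,Q$ of $G$ are mutually included if their sides can be named $P=X_PY_P$, $Q=X_QY_Q$ so that $X_Q\subsetneq X_P$ and $Y_P\subsetneq Y_Q$. The mutually included biclique graph $KB_m(G)$ has the set of bicliques of $G$ as vertex set, two distinct bicliques being adjacent iff they are mutually included. For a poset $\mathcal{P}=(C,\le)$ and $x\in C$, let $I^-_{\mathcal{P}}(x)=\{y\in C: y\le x\}$ and $I^+_{\mathcal{P}}(x)=\{y\in C: x\le y\}$; $\mathcal{P}$ is interval intersection closed (IIC) if for all $u,v\in C$: whenever $I^-_{\mathcal{P}}(u)\cap I^-_{\mathcal{P}}(v)\neq\emptyset$ there is $w\in C$ with $I^-_{\mathcal{P}}(w)=I^-_{\mathcal{P}}(u)\cap I^-_{\mathcal{P}}(v)$, and whenever $I^+_{\mathcal{P}}(u)\cap I^+_{\mathcal{P}}(v)\neq\emptyset$ there is $w\in C$ with $I^+_{\mathcal{P}}(w)=I^+_{\mathcal{P}}(u)\cap I^+_{\mathcal{P}}(v)$.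 The comparability graph of a poset $(C,\le)$ has vertex set $C$, two distinct elements adjacent iff they are comparable. A graph is IIC-comparability if it is the comparability graph of some (finite) IIC poset. *)

From mathcomp Require Import all_boot.
Set Implicit Arguments. Unset Strict Implicit. Unset Printing Implicit Defensive.

Section Graphs.
Variable T : finType.
Variable e : rel T.

Definition simple_graph : Prop := symmetric e /\ irreflexive e.

Definition bipartite : Prop := exists c : T -> bool, forall x y, e x y -> c x != c y.

Definition sides (P X Y : {set T}) : bool :=
  [&& X != set0, Y != set0, [disjoint X & Y], P == X :|: Y,
      [forall x in X, forall x' in X, ~~ e x x'],
      [forall y in Y, forall y' in Y, ~~ e y y'] &
      [forall x in X, forall y in Y, e x y]].

Definition cbip (P : {set T}) : bool := [exists X, exists Y, sides P X Y].

Definition is_biclique (P : {set T}) : bool :=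
  cbip P && [forall Q : {set T}, (P \subset Q) && cbip Q ==> (Q == P)].

Definition mutually_included (P Q : {set T}) : bool :=
  [exists XP, exists YP, exists XQ, exists YQ,
     [&& sides P XP YP, sides Q XQ YQ, XQ \proper XP & YP \proper YQ]].

Definition biclique_type := {P : {set T} | is_biclique P}.

Definition KBm : rel biclique_type :=
  fun P Q => (P != Q) && mutually_included (val P) (val Q).
End Graphs.
Arguments KBm {T} e.

Definition isomorphic (T1 T2 : finType) (e1 : rel T1) (e2 : rel T2) : Prop :=
  exists f : T1 -> T2, bijective f /\ forall x y, e1 x y = e2 (f x) (f y).

Section Posets.
Variable C : finType.
Variable le : rel C.

Definition partial_order : Prop :=
  reflexive le /\ antisymmetric le /\ transitive le.

Definition IIC : Prop :=
  (forall u v, (exists y, le y u /\ le y v) ->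
     exists w, forall y, le y w <-> (le y u /\ le y v)) /\
  (forall u v, (exists y, le u y /\ le v y) ->
     exists w, forall y, le w y <-> (le u y /\ le v y)).

Definition comparability : rel C := fun x y => (x != y) && (le x y || le y x).
End Posets.

From mathcomp Require Import all_boot.
Set Implicit Arguments. Unset Strict Implicit. Unset Printing Implicit Defensive.

(* (=>) Fix a proper 2-colouring c of the bipartite graph G.  The sides of a
   complete bipartite subgraph are exactly its two colour classes, and a
   biclique is determined by its true-coloured class A, its other class being
   the common neighbourhood of A (and conversely).  Ordering bicliques by
   inclusion of A, two distinct bicliques are mutually included iff they are
   comparable, so KB_m(G) is the comparability graph of this order.  It is IIC
   because intersecting the A-classes (resp. the other classes) of two
   bicliques with a common lower (resp. upper) bound yields again a class of a
   biclique, obtained by a common-neighbourhood closure.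

   (<=) For an IIC poset C, take the bipartite graph on two copies of C
   joining x on the left to y on the right when x <= y.  Its bicliques are
   exactly the sets (down-set of x) + (up-set of x), the surjectivity using
   the meet of the right side of a biclique, which exists by IIC; this
   bijection turns comparability in C into mutual inclusion. *)

Section SidesOfCompleteBipartite.
Variables (T : finType) (e : rel T).
Hypothesis esymm : symmetric e.

Lemma sidesP (P X Y : {set T}) : sides e P X Y ->
  [/\ X != set0, Y != set0, P = X :|: Y & forall x y, x \in X -> y \in Y -> e x y].
Proof.
case/and5P=> X0 Y0 _ /eqP -> /and3P [_ _ /forall_inP XY]; split=> // x y xX yY.
by move/forall_inP: (XY x xX); apply.
Qed.

Lemma sides_sym (P X Y : {set T}) : sides e P X Y -> sides e P Y X.
Proof.
case/and5P=> X0 Y0 dXY /eqP PXY /and3P [iX iY /forall_inP XY].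
rewrite /sides X0 Y0 disjoint_sym dXY PXY setUC eqxx iX iY /=.
apply/forall_inP=> y yY; apply/forall_inP=> x xX.
by rewrite esymm; move/forall_inP: (XY x xX); apply.
Qed.
End SidesOfCompleteBipartite.

Section ColourClasses.
Variables (T : finType) (e : rel T) (c : T -> bool).
Hypotheses (esymm : symmetric e) (proper_c : forall x y, e x y -> c x != c y).

Definition part (b : bool) (P : {set T}) : {set T} := [set x in P | c x == b].

Definition common_nb (b : bool) (U : {set T}) : {set T} :=
  [set x | (c x == b) && [forall y in U, e x y]].

Lemma part_split b (P : {set T}) : P = part b P :|: part (~~ b) P.
Proof. by apply/setP=> x; rewrite !inE; case: (x \in P) (c x) b => [] [] []. Qed.

Lemma part_colour b (P : {set T}) x : x \in part b P -> c x = b.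
Proof. by rewrite inE => /andP [_ /eqP]. Qed.

Lemma part_union b (X Y : {set T}) :
  (forall x, x \in X -> c x = b) -> (forall y, y \in Y -> c y = ~~ b) ->
  part b (X :|: Y) = X /\ part (~~ b) (X :|: Y) = Y.
Proof.
move=> cX cY; split; apply/setP=> z; rewrite !inE;
  move: (cX z) (cY z) => {cX cY}; case: (z \in X) (z \in Y) (c z) b => [] [] [] [] //=;
  by move=> hX hY; first [by move: (hX isT) | by move: (hY isT)].
Qed.

Lemma sides_intro b (P X Y : {set T}) : X != set0 -> Y != set0 -> P = X :|: Y ->
  (forall x, x \in X -> c x = b) -> (forall y, y \in Y -> c y = ~~ b) ->
  (forall x y, x \in X -> y \in Y -> e x y) -> sides e P X Y.
Proof.
move=> X0 Y0 PXY cX cY XY; rewrite /sides X0 Y0 PXY eqxx /=; apply/and4P; split.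
- apply/pred0P=> z /=; apply/negbTE/negP=> /andP [/cX zX /cY].
  by rewrite zX => {cX cY zX}; case: b.
- apply/forall_inP=> x xX; apply/forall_inP=> x' x'X.
  by apply/negP=> /proper_c; rewrite cX ?cX ?eqxx.
- apply/forall_inP=> y yY; apply/forall_inP=> y' y'Y.
  by apply/negP=> /proper_c; rewrite cY ?cY ?eqxx.
- by apply/forall_inP=> x xX; apply/forall_inP=> y yY; apply: XY.
Qed.

Lemma sides_parts (P X Y : {set T}) : sides e P X Y ->
  exists b, X = part b P /\ Y = part (~~ b) P.
Proof.
case/sidesP=> /set0Pn [x0 x0X] /set0Pn [y0 y0Y] -> XY.
have cX x : x \in X -> c x = c x0.
  move=> xX; move: (proper_c (XY x y0 xX y0Y)) (proper_c (XY x0 y0 x0X y0Y)).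
  by case: (c x) (c x0) (c y0) => [] [] [].
have cY y : y \in Y -> c y = ~~ c x0.
  by move=> yY; move: (proper_c (XY x0 y x0X yY)); case: (c x0) (c y) => [] [].
by exists (c x0); have [-> ->] := part_union cX cY.
Qed.

Lemma cbip_parts b (P : {set T}) : cbip e P -> sides e P (part b P) (part (~~ b) P).
Proof.
case/existsP=> X /existsP [Y sXY]; have [b' [eX eY]] := sides_parts sXY.
have [<- | nbb'] := eqVneq b' b; first by rewrite -eX -eY.
have -> : b = ~~ b' by move: nbb'; clear; case: b b' => [] [].
by rewrite negbK -eX -eY; exact: sides_sym.
Qed.

Lemma common_nb_anti b (U U' : {set T}) :
  U \subset U' -> common_nb b U' \subset common_nb b U.
Proof.
move=> /subsetP UU'; apply/subsetP=> x; rewrite !inE => /andP [-> /forall_inP adj].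
by apply/forall_inP=> y /UU'; exact: adj.
Qed.

Lemma common_nb_setU b (U U' : {set T}) :
  common_nb b (U :|: U') = common_nb b U :&: common_nb b U'.
Proof.
apply/setP=> x; rewrite !inE; case: (c x == b) => //=.
apply/forall_inP/andP => [adj | [/forall_inP adj /forall_inP adj'] y].
  by split; apply/forall_inP=> y yU; apply: adj; rewrite inE yU ?orbT.
by rewrite inE => /orP [/adj | /adj'].
Qed.

Lemma common_nb_galois b (S : {set T}) : (forall x, x \in S -> c x = b) ->
  S \subset common_nb b (common_nb (~~ b) S).
Proof.
move=> cS; apply/subsetP=> x xS; rewrite inE cS // eqxx /=.
by apply/forall_inP=> y; rewrite inE esymm => /andP [_ /forall_inP]; apply.
Qed.

(* A biclique is the full common neighbourhood (within a colour class) of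
   its other side: any vertex adjacent to all of one side extends it. *)
Lemma biclique_common_nb b (P : {set T}) :
  is_biclique e P -> part b P = common_nb b (part (~~ b) P).
Proof.
case/andP=> cbP /forallP maxP.
have [_ B0 PAB AB] := sidesP (cbip_parts b cbP).
apply/eqP; rewrite eqEsubset; apply/andP; split; apply/subsetP=> x.
  move=> xA; rewrite inE (part_colour xA) eqxx /=.
  by apply/forall_inP=> y; exact: AB.
rewrite inE => /andP [/eqP cx /forall_inP xB].
have cbQ : cbip e (x |: P).
  apply/existsP; exists (x |: part b P); apply/existsP; exists (part (~~ b) P).
  apply: (sides_intro (b := b)).
  - by apply/set0Pn; exists x; rewrite setU11.
  - exact: B0.
  - by rewrite -setUA -PAB.
  - by move=> z /setU1P [-> // | /part_colour].
  - by move=> z /part_colour.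
  - by move=> z y /setU1P [-> | zA] yB; [exact: xB | exact: AB].
move: (maxP (x |: P)); rewrite subsetUr cbQ => /eqP QP.
by rewrite inE cx eqxx andbT -QP setU11.
Qed.

Lemma biclique_intro b (P : {set T}) : part b P != set0 -> part (~~ b) P != set0 ->
  part b P = common_nb b (part (~~ b) P) ->
  part (~~ b) P = common_nb (~~ b) (part b P) -> is_biclique e P.
Proof.
move=> A0 B0 eA eB.
have AB x y : x \in part b P -> y \in part (~~ b) P -> e x y.
  by rewrite {1}eA inE => /andP [_ /forall_inP]; apply.
have cbP : cbip e P.
  apply/existsP; exists (part b P); apply/existsP; exists (part (~~ b) P).
  apply: (sides_intro (b := b)) => //; first exact: part_split.
  - by move=> x /part_colour.
  - by move=> y /part_colour.
apply/andP; split=> //; apply/forallP=> Q; apply/implyP=> /andP [PQ cbQ].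
have [_ _ _ ABQ] := sidesP (cbip_parts b cbQ).
have PQpart b' : part b' P \subset part b' Q.
  by apply/subsetP=> x; rewrite !inE => /andP [/(subsetP PQ) -> ->].
have QA : part b Q \subset part b P.
  apply/subsetP=> x xQ; rewrite eA inE (part_colour xQ) eqxx /=.
  by apply/forall_inP=> y /(subsetP (PQpart _)); exact: ABQ.
have QB : part (~~ b) Q \subset part (~~ b) P.
  apply/subsetP=> y yQ; rewrite eB inE (part_colour yQ) eqxx /=.
  by apply/forall_inP=> x /(subsetP (PQpart _)) xQ; rewrite esymm; exact: ABQ.
by rewrite eqEsubset PQ andbT (part_split b Q) (part_split b P) setUSS.
Qed.

Lemma closure_biclique b (U : {set T}) : common_nb b U != set0 -> U != set0 ->
  let A := common_nb b U in
  is_biclique e (A :|: common_nb (~~ b) A) /\ part b (A :|: common_nb (~~ b) A) = A.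
Proof.
move=> /[dup] A0 /set0Pn [x0 x0A] U0 A; set B := common_nb (~~ b) A.
have cA x : x \in A -> c x = b by rewrite inE => /andP [/eqP].
have cB y : y \in B -> c y = ~~ b by rewrite inE => /andP [/eqP].
have cU y : y \in U -> c y = ~~ b.
  move=> yU; move: x0A; rewrite inE => /andP [/eqP cx0 /forall_inP /(_ y yU)].
  by move/proper_c; rewrite cx0; clear; case: (c y); case: b.
have UB : U \subset B by rewrite /B /A -{2}(negbK b); exact: common_nb_galois.
have [pA pB] := part_union cA cB.
split=> //; apply: (biclique_intro (b := b)); rewrite ?pA ?pB //.
- by case/set0Pn: U0 => y /(subsetP UB) yB; apply/set0Pn; exists y.
- by apply/eqP; rewrite eqEsubset common_nb_galois ?common_nb_anti.
Qed.

Lemma biclique_part0 b (P : {set T}) : is_biclique e P -> part b P != set0.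
Proof. by case/andP=> /(cbip_parts b) /sidesP []. Qed.

Lemma biclique_part_inj b (P Q : {set T}) : is_biclique e P -> is_biclique e Q ->
  part b P = part b Q -> P = Q.
Proof.
move=> bP bQ ePQ; rewrite (part_split b P) (part_split b Q).
by rewrite (biclique_common_nb (~~ b) bP) (biclique_common_nb (~~ b) bQ) !negbK ePQ.
Qed.

Lemma part_anti b (P Q : {set T}) : is_biclique e P -> is_biclique e Q ->
  part b P \subset part b Q -> part (~~ b) Q \subset part (~~ b) P.
Proof.
move=> bP bQ; rewrite (biclique_common_nb (~~ b) bP) (biclique_common_nb (~~ b) bQ).
by rewrite !negbK; exact: common_nb_anti.
Qed.

Lemma part_anti_iff b (P Q : {set T}) : is_biclique e P -> is_biclique e Q ->
  (part b P \subset part b Q) = (part (~~ b) Q \subset part (~~ b) P).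
Proof.
move=> bP bQ; apply/idP/idP; first exact: part_anti.
by move/(part_anti bQ bP); rewrite negbK.
Qed.

Lemma biclique_meet b (u v y : {set T}) :
  is_biclique e u -> is_biclique e v -> is_biclique e y ->
  part b y \subset part b u :&: part b v ->
  exists2 w, is_biclique e w & part b w = part b u :&: part b v.
Proof.
move=> bu bv b_y yuv; set U := part (~~ b) u :|: part (~~ b) v.
have eU : common_nb b U = part b u :&: part b v.
  by rewrite common_nb_setU -!biclique_common_nb.
have A0 : common_nb b U != set0.
  case/set0Pn: (biclique_part0 b b_y) => z /(subsetP yuv) zuv.
  by apply/set0Pn; exists z; rewrite eU.
have U0 : U != set0.
  by case/set0Pn: (biclique_part0 (~~ b) bu) => z zu; apply/set0Pn; exists z; rewrite inE zu.
by have [bw pw] := closure_biclique A0 U0; eexists; [exact: bw | rewrite pw eU].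
Qed.

Lemma mutually_included_of b (P Q : {set T}) : is_biclique e P -> is_biclique e Q ->
  P != Q -> part b Q \subset part b P -> mutually_included e P Q.
Proof.
move=> bP bQ nPQ QP; have cP := proj1 (andP bP); have cQ := proj1 (andP bQ).
apply/existsP; exists (part b P); apply/existsP; exists (part (~~ b) P).
apply/existsP; exists (part b Q); apply/existsP; exists (part (~~ b) Q).
rewrite !cbip_parts // !properEneq QP part_anti // !andbT /=; apply/andP; split.
- by apply: contraNneq nPQ => /esym /(biclique_part_inj bP bQ) ->.
- by apply: contraNneq nPQ => /(biclique_part_inj bP bQ) ->.
Qed.

Lemma mutually_includedE (P Q : {set T}) : is_biclique e P -> is_biclique e Q ->
  P != Q ->
  mutually_included e P Q = (part true P \subset part true Q) || (part true Q \subset part true P).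
Proof.
move=> bP bQ nPQ; apply/idP/idP.
  case/existsP=> XP /existsP [YP /existsP [XQ /existsP [YQ /and4P [sP sQ XQP _]]]].
  have [bP' [eXP _]] := sides_parts sP; have [bQ' [eXQ _]] := sides_parts sQ.
  have [/set0Pn [z zXQ] _ _ _] := sidesP sQ.
  have same_colour : bQ' = bP'.
    have zXP := subsetP (proper_sub XQP) z zXQ.
    rewrite eXQ in zXQ; rewrite eXP in zXP.
    by rewrite -(part_colour zXQ) -(part_colour zXP).
  move: XQP; rewrite eXP eXQ same_colour => /proper_sub.
  case: bP' {eXP eXQ same_colour} => QP; first by rewrite QP orbT.
  by rewrite (part_anti_iff true bP bQ) QP.
case/orP=> [PQ | QP]; last exact: (mutually_included_of bP bQ nPQ QP).
rewrite (part_anti_iff true bP bQ) in PQ; exact: (mutually_included_of bP bQ nPQ PQ).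
Qed.

Definition biclique_le : rel (biclique_type e) :=
  fun P Q => part true (val P) \subset part true (val Q).

Lemma KBm_comparability (P Q : biclique_type e) :
  KBm e P Q = comparability biclique_le P Q.
Proof.
rewrite /KBm /comparability; have [-> // | nPQ] := eqVneq P Q; rewrite /=.
apply: mutually_includedE; try exact: valP.
by apply: contraNneq nPQ => /val_inj ->.
Qed.

Lemma biclique_le_order : partial_order biclique_le.
Proof.
split; first by move=> P; exact: subxx.
split; last by move=> Q P R; exact: subset_trans.
move=> P Q /andP [PQ QP]; apply/val_inj/(biclique_part_inj (b := true) (valP P) (valP Q)).
by apply/eqP; rewrite eqEsubset; apply/andP.
Qed.

(* ... with the IIC property: lower meets come from biclique_meet on the
   true classes, upper ones from biclique_meet on the false classes. *)
Lemma biclique_le_IIC : IIC biclique_le.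
Proof.
split=> u v [y []].
  move=> yu yv; have yuv : part true (val y) \subset part true (val u) :&: part true (val v).
    by rewrite subsetI; apply/andP.
  have [w bw pw] := biclique_meet (valP u) (valP v) (valP y) yuv.
  by exists (Sub w bw) => z; rewrite /biclique_le /= pw subsetI; split=> [/andP | [-> ->]].
move=> /(part_anti (valP u) (valP y)) yu /(part_anti (valP v) (valP y)) yv.
have yuv : part false (val y) \subset part false (val u) :&: part false (val v).
  by rewrite subsetI; apply/andP.
have [w bw pw] := biclique_meet (valP u) (valP v) (valP y) yuv.
exists (Sub w bw) => z; rewrite /biclique_le /=.
rewrite !(part_anti_iff true _ (valP z)) ?(valP u) ?(valP v) //= pw subsetI.
by split=> [/andP | [-> ->]].
Qed.
End ColourClasses.

Lemma isomorphic_sym (T1 T2 : finType) (e1 : rel T1) (e2 : rel T2) :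
  isomorphic e1 e2 -> isomorphic e2 e1.
Proof.
case=> f [[g fK gK] ef]; exists g; split; first by exists f.
by move=> x y; rewrite ef !gK.
Qed.

Lemma isomorphic_trans (T1 T2 T3 : finType) (e1 : rel T1) (e2 : rel T2) (e3 : rel T3) :
  isomorphic e1 e2 -> isomorphic e2 e3 -> isomorphic e1 e3.
Proof.
case=> f [bf ef] [g [bg eg]]; exists (g \o f); split; first exact: bij_comp.
by move=> x y; rewrite ef eg.
Qed.

Lemma IIC_meet_seq (C : finType) (le : rel C) : IIC le ->
  forall s : seq C, s != [::] -> (exists y, forall z, z \in s -> le y z) ->
  exists w, forall y, le y w <-> (forall z, z \in s -> le y z).
Proof.
case=> meet _; elim=> [// | z s IH] _ [y0 y0s].
have [-> | s0] := eqVneq s [::].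
  exists z => y; split=> [yz z' | yz]; last by apply: yz; rewrite mem_head.
  by rewrite inE => /eqP ->.
have [w' w'E] : exists w', forall y, le y w' <-> (forall z', z' \in s -> le y z').
  by apply: IH s0 _; exists y0 => z' z's; apply: y0s; rewrite inE z's orbT.
have y0w' : le y0 w' by apply/w'E => z' z's; apply: y0s; rewrite inE z's orbT.
have [w wE] := meet z w' (ex_intro _ y0 (conj (y0s z (mem_head _ _)) y0w')).
exists w => y; split=> [/wE [yz /w'E ys] z' | ys].
  by rewrite inE => /orP [/eqP -> // | /ys].
apply/wE; split; first by apply: ys; rewrite mem_head.
by apply/w'E => z' z's; apply: ys; rewrite inE z's orbT.
Qed.

Section OrderBigraph.
Variables (C : finType) (le : rel C).
Hypothesis le_order : partial_order le.

Let le_refl : reflexive le := proj1 le_order.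
Let le_anti : antisymmetric le := proj1 (proj2 le_order).
Let le_trans : transitive le := proj2 (proj2 le_order).

Definition order_bigraph : rel (C + C) := fun a a' =>
  match a, a' with
  | inl x, inr y | inr y, inl x => le x y
  | _, _ => false
  end.

Definition is_left (a : C + C) : bool := if a is inl _ then true else false.

Lemma order_bigraph_sym : symmetric order_bigraph.
Proof. by case=> x [] y. Qed.

Lemma is_left_proper a a' : order_bigraph a a' -> is_left a != is_left a'.
Proof. by case: a a' => x [] y. Qed.

Definition principal (x : C) : {set C + C} :=
  [set a | match a with inl y => le y x | inr y => le x y end].

Lemma principal_biclique x : is_biclique order_bigraph (principal x).
Proof.
apply: (biclique_intro order_bigraph_sym is_left_proper (b := true)).
- by apply/set0Pn; exists (inl x); rewrite !inE /= le_refl.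
- by apply/set0Pn; exists (inr x); rewrite !inE /= le_refl.
- apply/setP=> [[y | y]]; rewrite !inE /= ?eqxx ?andbT ?andbF //.
  apply/idP/forall_inP=> [yx | yB]; last by apply: (yB (inr x)); rewrite !inE /= le_refl.
  by case=> z; rewrite !inE /= ?eqxx ?andbT ?andbF //; exact: le_trans.
- apply/setP=> [[y | y]]; rewrite !inE /= ?eqxx ?andbT ?andbF //.
  apply/idP/forall_inP=> [xy | yA]; last by apply: (yA (inl x)); rewrite !inE /= le_refl.
  by case=> z; rewrite !inE /= ?eqxx ?andbT ?andbF // => zx; exact: le_trans zx xy.
Qed.

Definition principal_vertex (x : C) : biclique_type order_bigraph :=
  Sub _ (principal_biclique x).

Lemma principal_le x y : biclique_le is_left (principal_vertex x) (principal_vertex y) = le x y.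
Proof.
rewrite /biclique_le /=; apply/subsetP/idP=> [sub_xy | xy [z | z]].
- by move: (sub_xy (inl x)); rewrite !inE /= le_refl eqxx /= andbT; apply.
- by rewrite !inE /= ?eqxx ?andbT => zx; exact: le_trans zx xy.
- by rewrite !inE /= ?andbF.
Qed.

Lemma principal_inj : injective principal_vertex.
Proof.
move=> x y exy; apply: le_anti.
by rewrite -!principal_le exy /biclique_le subxx.
Qed.

Lemma principal_comparability x y :
  comparability le x y = KBm order_bigraph (principal_vertex x) (principal_vertex y).
Proof.
rewrite (KBm_comparability order_bigraph_sym is_left_proper) /comparability.
by rewrite !principal_le (inj_eq principal_inj).
Qed.

Lemma biclique_left (P : {set C + C}) y : is_biclique order_bigraph P ->
  (inl y \in P) = [forall z, (inr z \in P) ==> le y z].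
Proof.
move=> bP; have := biclique_common_nb order_bigraph_sym is_left_proper true bP.
move/setP/(_ (inl y)); rewrite !inE /= eqxx andbT => ->.
apply/forall_inP/forallP=> [yB z | yB [z | z]]; rewrite ?inE /= ?andbF //.
  by apply/implyP=> zP; apply: (yB (inr z)); rewrite !inE zP /= eqxx.
by rewrite eqxx andbT => zP; move/implyP: (yB z); apply.
Qed.

Hypothesis le_IIC : IIC le.

(* Every biclique is principal: it is the biclique of the meet of its right
   side, which exists by IIC since its left side is nonempty. *)
Lemma principal_surj (P : biclique_type order_bigraph) : exists x, principal_vertex x = P.
Proof.
have bP := valP P; set B := [seq z <- enum C | inr z \in val P].
have memB z : (z \in B) = (inr z \in val P) by rewrite mem_filter mem_enum andbT.
have [w wE] : exists w, forall y, le y w <-> (forall z, z \in B -> le y z).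
  apply: (IIC_meet_seq le_IIC).
    case/set0Pn: (biclique_part0 order_bigraph_sym is_left_proper false bP).
    case=> [z | z]; rewrite !inE /= ?andbF // => /andP [zP _].
    by apply/eqP => B0; move: (memB z); rewrite B0 zP.
  case/set0Pn: (biclique_part0 order_bigraph_sym is_left_proper true bP).
  case=> [y | y]; rewrite !inE /= ?andbF // => /andP [yP _]; exists y => z.
  by rewrite memB; move: yP; rewrite biclique_left // => /forallP /(_ z) /implyP.
exists w; apply/val_inj/(biclique_part_inj order_bigraph_sym is_left_proper (b := true)).
- exact: principal_biclique.
- exact: bP.
apply/setP=> [[y | y]]; rewrite !inE /= ?andbF // eqxx !andbT (biclique_left _ bP).
apply/idP/forallP=> [/wE yB z | yB]; first by apply/implyP; rewrite -memB; exact: yB.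
by apply/wE=> z; rewrite memB; exact/implyP.
Qed.

Lemma principal_bij : bijective principal_vertex.
Proof.
apply: (inj_card_bij principal_inj); rewrite -(card_codom principal_inj).
apply/subset_leq_card/subsetP=> P _.
by have [x <-] := principal_surj P; exact: codom_f.
Qed.
End OrderBigraph.

Theorem theorem5 (V : finType) (adj : rel V) :
  simple_graph adj ->
  (exists (T : finType) (e : rel T),
      simple_graph e /\ bipartite e /\ isomorphic (KBm e) adj) <->
  (exists (C : finType) (le : rel C),
      partial_order le /\ IIC le /\ isomorphic (comparability le) adj).
Proof.
move=> _; split.
- case=> T [e [[esymm _] [[c proper_c] iso]]].
  exists (biclique_type e), (biclique_le c).
  split; first exact: biclique_le_order esymm proper_c.
  split; first exact: biclique_le_IIC esymm proper_c.
  apply: isomorphic_trans iso; exists id; split; first by exists id.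
  by move=> P Q; rewrite (KBm_comparability esymm proper_c).
- case=> C [le [le_order [le_IIC iso]]].
  exists (C + C)%type, (order_bigraph le).
  split; first by split; [exact: order_bigraph_sym | case].
  split; first by exists (@is_left C); exact: is_left_proper.
  apply: isomorphic_trans iso; apply: isomorphic_sym.
  exists (principal_vertex le_order); split; first exact: principal_bij.
  exact: principal_comparability.
Qed.
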